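(* Let $\mathfrak{g}$ be a real Lie algebra of dimension $2n$ and let $V\subset\mathfrak{g}$ be a subspace of dimension $n$ such that: (1) the linear map $\tilde N^H\colon V^{\mathrm{ann}}\to\Lambda^2V^*$ has rank three; (2) its image $W=\operatorname{im}\tilde N^H$ consists of simple forms, i.e. $\eta\wedge\eta=0$ for all $\eta\in W$; (3) there is no $\sigma\in V^*\setminus\{0\}$ such that $\sigma\wedge\eta=0$ for all $\eta\in W$. Then for any Lie subalgebra $H\subset\mathfrak{g}$ complementary to $V$ there exists a $\mathrm{GL}(n,\mathbb{R})$-structure compatible with the splitting $\mathfrak{g}=V\oplus H$ whose intrinsic torsion satisfies $\tau_2=0=\tau_5=\tau_6$.
   Context: $d$ denotes the Chevalley--Eilenberg differential on $\Lambda\mathfrak{g}^*$, so $d\xi(X,Y)=-\xi([X,Y])$ for $\xi\in\mathfrak{g}^*$. $V^{\mathrm{ann}}\subset\mathfrak{g}^*$ is the annihilator of $V$, and $\tilde N^H(\xi)=d\xi|_{V\times V}\in\Lambda^2V^*$. A $\mathrm{GL}(n,\mathbb{R})$-structure compatible with $\mathfrak{g}=V\oplus H$ is a pseudoriemannian (necessarily neutral) metric $g$ on $\mathfrak{g}$ with $g(KX,KY)=-g(X,Y)$, where $K=\mathrm{id}_V-\mathrm{id}_H$; equivalently a nondegenerate two-form $F(X,Y)=g(KX,Y)$ vanishing on $V\times V$ and on $H\times H$. In this setting the components $\tau_1+\tau_2$ of the intrinsic torsion correspond (up to a nonzero constant factor) to the tensor $A(X,Y,Z)=g([X,Y],Z)$,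 $X,Y,Z\in V$, viewed in $\Lambda^2V^*\otimes V^*=\Lambda^3V^*\oplus W_2$, where $\tau_1$ is its totally skew part and $\tau_2$ its component in the complement $W_2$ (the kernel of the alternation map $\Lambda^2V^*\otimes V^*\to\Lambda^3V^*$); thus $\tau_2=0$ means that $A$ is totally skew-symmetric. Similarly $\tau_5+\tau_6$ correspond to $B(X,Y,Z)=g([X,Y],Z)$ for $X,Y,Z\in H$, so $\tau_5=\tau_6=0$ means $B=0$. *)

From HB Require Import structures.
From mathcomp Require Import all_boot all_order all_algebra.
From mathcomp Require Import reals.
Set Implicit Arguments. Unset Strict Implicit. Unset Printing Implicit Defensive.
Import GRing.Theory Num.Theory.
Local Open Scope ring_scope.

(* Subspaces of g are row spaces of square matrices (mxalgebra).
   A linear form xi in g^* is a column vector, acting by X |-> (X *m xi) 0 0. *)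

Section Defs.
Variable R : realType.
Variable m : nat.
Local Notation vec := 'rV[R]_m.

Definition lie_bracket (br : vec -> vec -> vec) : Prop :=
  [/\ forall (a : R) X Y Z, br (a *: X + Y) Z = a *: br X Z + br Y Z,
      forall (a : R) X Y Z, br X (a *: Y + Z) = a *: br X Y + br X Z,
      forall X, br X X = 0 &
      forall X Y Z, br X (br Y Z) + br Y (br Z X) + br Z (br X Y) = 0].

Definition lie_subalgebra (br : vec -> vec -> vec) (H : 'M[R]_m) : Prop :=
  forall X Y : vec, (X <= H)%MS -> (Y <= H)%MS -> (br X Y <= H)%MS.

Definition complementary (V H : 'M[R]_m) : Prop :=
  (forall X : vec, exists v h : vec, [/\ (v <= V)%MS, (h <= H)%MS & X = v + h]) /\
  (forall v : vec, (v <= V)%MS -> (v <= H)%MS -> v = 0).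

Definition form_app (xi : 'cV[R]_m) (X : vec) : R := (X *m xi) 0 0.

Definition in_ann (V : 'M[R]_m) (xi : 'cV[R]_m) : Prop :=
  forall X : vec, (X <= V)%MS -> form_app xi X = 0.

(* Chevalley--Eilenberg differential: d xi (X,Y) = - xi([X,Y]).
   N^H(xi) is its restriction to V x V (arguments X, Y are taken in V). *)
Definition dform (br : vec -> vec -> vec) (xi : 'cV[R]_m) (X Y : vec) : R :=
  - form_app xi (br X Y).

Definition wedge12 (s : vec -> R) (e : vec -> vec -> R) (X Y Z : vec) : R :=
  s X * e Y Z - s Y * e X Z + s Z * e X Y.

Definition wedge22 (e f : vec -> vec -> R) (X Y Z W : vec) : R :=
  e X Y * f Z W - e X Z * f Y W + e X W * f Y Z
  + e Z W * f X Y - e Y W * f X Z + e Y Z * f X W.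

Definition NH_rank3 (br : vec -> vec -> vec) (V : 'M[R]_m) : Prop :=
  exists xi1 xi2 xi3 : 'cV[R]_m,
  [/\ in_ann V xi1, in_ann V xi2, in_ann V xi3,
      (forall a1 a2 a3 : R,
         (forall X Y : vec, (X <= V)%MS -> (Y <= V)%MS ->
            a1 * dform br xi1 X Y + a2 * dform br xi2 X Y + a3 * dform br xi3 X Y = 0) ->
         [/\ a1 = 0, a2 = 0 & a3 = 0]) &
      (forall xi, in_ann V xi -> exists a1 a2 a3 : R,
         forall X Y : vec, (X <= V)%MS -> (Y <= V)%MS ->
           dform br xi X Y =
             a1 * dform br xi1 X Y + a2 * dform br xi2 X Y + a3 * dform br xi3 X Y)].

Definition NH_image_simple (br : vec -> vec -> vec) (V : 'M[R]_m) : Prop :=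
  forall xi, in_ann V xi ->
  forall X Y Z W : vec, (X <= V)%MS -> (Y <= V)%MS -> (Z <= V)%MS -> (W <= V)%MS ->
    wedge22 (dform br xi) (dform br xi) X Y Z W = 0.

(* (3): no nonzero sigma in V^* with sigma ^ eta = 0 for all eta in W.
   (Every element of V^* is the restriction of some linear form on g.) *)
Definition NH_no_common_factor (br : vec -> vec -> vec) (V : 'M[R]_m) : Prop :=
  ~ exists sigma : 'cV[R]_m,
      (exists X : vec, (X <= V)%MS /\ form_app sigma X != 0) /\
      (forall xi, in_ann V xi ->
         forall X Y Z : vec, (X <= V)%MS -> (Y <= V)%MS -> (Z <= V)%MS ->
           wedge12 (form_app sigma) (dform br xi) X Y Z = 0).

Definition bil (G : 'M[R]_m) (X Y : vec) : R := (X *m G *m Y^T) 0 0.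

(* GL(n,R)-structure compatible with g = V (+) H: a pseudoriemannian metric
   (symmetric, nondegenerate) with g(KX,KY) = -g(X,Y), K = id_V - id_H;
   written with X = v1 + h1, Y = v2 + h2, so KX = v1 - h1, KY = v2 - h2. *)
Definition compatible_GL_structure (V H : 'M[R]_m) (G : 'M[R]_m) : Prop :=
  [/\ G^T = G, G \in unitmx &
      forall v1 v2 h1 h2 : vec, (v1 <= V)%MS -> (v2 <= V)%MS ->
        (h1 <= H)%MS -> (h2 <= H)%MS ->
        bil G (v1 - h1) (v2 - h2) = - bil G (v1 + h1) (v2 + h2)].

(* tau_2 = 0 : A(X,Y,Z) = g([X,Y],Z) on V is totally skew-symmetric *)
Definition tau2_zero (br : vec -> vec -> vec) (V G : 'M[R]_m) : Prop :=
  forall X Y Z : vec, (X <= V)%MS -> (Y <= V)%MS -> (Z <= V)%MS ->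
    bil G (br X Y) Z = - bil G (br Y X) Z /\ bil G (br X Y) Z = - bil G (br X Z) Y.

(* tau_5 = tau_6 = 0 : B(X,Y,Z) = g([X,Y],Z) vanishes on H *)
Definition tau56_zero (br : vec -> vec -> vec) (H G : 'M[R]_m) : Prop :=
  forall X Y Z : vec, (X <= H)%MS -> (Y <= H)%MS -> (Z <= H)%MS ->
    bil G (br X Y) Z = 0.

End Defs.

From HB Require Import structures.
From mathcomp Require Import all_boot all_order all_algebra.
From mathcomp Require Import reals.
From mathcomp.algebra_tactics Require Import ring lra.
From Stdlib Require Import Classical.
Import GRing.Theory Num.Theory.
Local Open Scope ring_scope.

(* Write c for the H-component of the bracket on V; the image W of N^H then
   consists of the 2-forms y o c on V.  A three-dimensional space of decomposable
   2-forms without a common linear factor is the square Lambda^2 U of a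
   three-dimensional U = <e1, e2, e3> in V^*: normalising a basis of W on vectors
   X1, X2, X3 of V gives z1, z2, z3 with z1 o c = e2 ^ e3, z2 o c = e3 ^ e1,
   z3 o c = e1 ^ e2.  Pick an isomorphism N between H and V^* such that c(a, b)
   pairs with d to (e1 ^ e2 ^ e3)(a, b, d).  The metric for which V and H are
   isotropic and paired by N then has g([X, Y], Z) = (e1 ^ e2 ^ e3)(X, Y, Z) on
   V, which is totally skew, and g([X, Y], Z) = 0 on the isotropic subalgebra
   H. *)

Section RowSpaces.
Context {F : fieldType} {n : nat}.
Implicit Types (A Q U : 'M[F]_n) (u : 'rV[F]_n).

Lemma linear_form_colE {f : 'rV[F]_n -> F} :
  (forall k x y, f (k *: x + y) = k * f x + f y) ->
  forall a, f a = (a *m \col_i f 'e_i) 0 0.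
Proof.
move=> fL a.
have f0 : f 0 = 0.
  by apply: (addrI (f 0)); have := fL 1 0 0; rewrite scaler0 addr0 mul1r => <-; rewrite addr0.
have fD x y : f (x + y) = f x + f y by rewrite -{1}[x]scale1r fL mul1r.
have fZ k x : f (k *: x) = k * f x by rewrite -[k *: x]addr0 fL f0 addr0.
rewrite {1}(row_sum_delta a) mxE.
elim: (index_enum _) => [|j s IH]; first by rewrite !big_nil f0.
by rewrite !big_cons fD fZ IH mxE.
Qed.

Lemma row_full_adds {A Q} :
  (forall u, exists v h, [/\ (v <= A)%MS, (h <= Q)%MS & u = v + h]) ->
  row_full (A + Q)%MS.
Proof.
move=> hsum; rewrite -sub1mx; apply/row_subP => i.
by have [v [h [hv hh ->]]] := hsum (row i 1%:M); exact: addmx_sub_adds.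
Qed.

Lemma capmx_eq0 {A Q} :
  (forall u, (u <= A)%MS -> (u <= Q)%MS -> u = 0) -> (A :&: Q = 0)%MS.
Proof.
move=> hcap; apply/eqP; rewrite -submx0; apply/row_subP => i.
have /andP[hA hQ] : ((row i (A :&: Q) <= A) && (row i (A :&: Q) <= Q))%MS.
  by rewrite -sub_capmx row_sub.
by rewrite (hcap _ hA hQ) sub0mx.
Qed.

Lemma inj_row_free m (M : 'M[F]_(m, n)) :
  (forall v : 'rV_m, v *m M = 0 -> v = 0) -> row_free M.
Proof.
move=> hinj; rewrite -kermx_eq0 -submx0; apply/row_subP => i.
by rewrite (hinj _ (sub_kermxP (row_sub i _))) sub0mx.
Qed.

Lemma exists_inj_submx {U Q} : \rank U = \rank Q ->
  exists2 K : 'M[F]_n, (K <= Q)%MS & forall u, (u <= U)%MS -> u *m K = 0 -> u = 0.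
Proof.
move=> eqUQ.
pose BQ := castmx (esym eqUQ, erefl n) (row_base Q).
have eqBQ : (BQ :=: Q)%MS := eqmx_trans (eqmx_cast _ _) (eq_row_base Q).
have freeBQ : row_free BQ by rewrite /row_free eqBQ eqUQ.
exists (pinvmx (row_base U) *m BQ); first by rewrite -eqBQ submxMl.
move=> u; rewrite -(eq_row_base U) => /submxP[d ->].
rewrite mulmxA -(mulmxA d) mulmxVp ?row_base_free // mulmx1 => /eqP.
by rewrite mulmx_free_eq0 // => /eqP->; rewrite mul0mx.
Qed.

Lemma unitmx_completion {A Q} : row_full (A + Q)%MS -> (A :&: Q = 0)%MS ->
  exists2 K : 'M[F]_n, (K <= Q)%MS & A + K \in unitmx.
Proof.
move=> fullAQ capAQ.
have rankQ : \rank (kermx A) = \rank Q.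
  have := mxrank_sum_cap A Q; rewrite capAQ mxrank0 addn0 (eqP fullAQ) => dimE.
  by rewrite mxrank_ker; apply: (@addnI (\rank A)); rewrite subnKC ?rank_leq_col.
have [K KQ injK] := exists_inj_submx rankQ.
exists K => //; rewrite -row_free_unit; apply: inj_row_free => u.
rewrite mulmxDr => /eqP; rewrite addr_eq0 => /eqP uAK.
have uA0 : u *m A = 0.
  apply/eqP; rewrite -submx0 -capAQ sub_capmx submxMl uAK eqmx_opp.
  exact: submx_trans (submxMl _ _) KQ.
by apply: injK; [apply/sub_kermxP | apply/eqP; rewrite -oppr_eq0 -uAK uA0].
Qed.

End RowSpaces.

Definition wedge11 {R : pzRingType} {T : Type} (s t : T -> R) (Z W : T) : R :=
  s Z * t W - s W * t Z.

Lemma mulmx_col_row (R : pzRingType) (n m : nat) (q : 'rV[R]_n) (E : 'cV[R]_n)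
  (z : 'rV[R]_m) : q *m (E *m z) = (q *m E) 0 0 *: z.
Proof. by rewrite mulmxA {1}[q *m E]mx11_scalar mul_scalar_mx. Qed.

Lemma bil_tr (R : realType) (m : nat) (N : 'M[R]_m) (X Y : 'rV[R]_m) :
  bil N X Y = bil N^T Y X.
Proof. by rewrite /bil -[X *m N *m Y^T]trmxK [in LHS]mxE !trmx_mul trmxK mulmxA. Qed.

Lemma bilNl (R : realType) (m : nat) (N : 'M[R]_m) (X Y : 'rV[R]_m) :
  bil N (- X) Y = - bil N X Y.
Proof. by rewrite /bil !mulNmx [(- (_ : 'M[R]_1)) 0 0]mxE. Qed.

Lemma bilNr (R : realType) (m : nat) (N : 'M[R]_m) (X Y : 'rV[R]_m) :
  bil N X (- Y) = - bil N X Y.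
Proof. by rewrite /bil linearN /= mulmxN [(- (_ : 'M[R]_1)) 0 0]mxE. Qed.

Section TwoForms.
Context {R : realType} {m : nat}.
Implicit Types (e p q : 'rV[R]_m -> 'rV[R]_m -> R) (X Y Z W : 'rV[R]_m).

Lemma wedge22_unit_split {e X Y Z W} :
  wedge22 e e X Y Z W = 0 -> e X Y = 1 -> e Z W = wedge11 (e X) (e Y) Z W.
Proof. by rewrite /wedge22 /wedge11 => + eXY; rewrite eXY; lra. Qed.

Lemma wedge22_polar_split {p q X Y Z W} :
  wedge22 p q X Y Z W = 0 -> p X Y = 1 -> q X Y = 0 ->
  q Z W = wedge11 (p X) (q Y) Z W + wedge11 (q X) (p Y) Z W.
Proof. by rewrite /wedge22 /wedge11 => + pXY qXY; rewrite pXY qXY; lra. Qed.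

Lemma wedge22_null_split {q X Y Z W} :
  wedge22 q q X Y Z W = 0 -> q X Y = 0 -> q X Z * q Y W = q X W * q Y Z.
Proof. by rewrite /wedge22 => + qXY; rewrite qXY; lra. Qed.

Lemma wedge12_common_factor (al be u2 v2 u3 v3 : 'rV[R]_m -> R) (la mu k1 k2 k3 : R) A B C :
  (forall Z, mu * u2 Z = la * v2 Z) -> (forall Z, mu * u3 Z = la * v3 Z) ->
  wedge12 (fun Z => mu * al Z - la * be Z)
    (fun Z W => k1 * wedge11 al be Z W
       + k2 * (wedge11 al v2 Z W + wedge11 u2 be Z W)
       + k3 * (wedge11 al v3 Z W + wedge11 u3 be Z W)) A B C = 0.
Proof.
move=> rel2 rel3.
(* sigma ^ omega = k2 det(al, be, la v2 - mu u2) + k3 det(al, be, la v3 - mu u3) *)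
pose det (f g h : 'rV[R]_m -> R) := f A * wedge11 g h B C - f B * wedge11 g h A C
  + f C * wedge11 g h A B.
pose d2 Z := la * v2 Z - mu * u2 Z; pose d3 Z := la * v3 Z - mu * u3 Z.
transitivity (k2 * det al be d2 + k3 * det al be d3).
  by rewrite /wedge12 /det /wedge11 /d2 /d3; ring.
have d0 Z : d2 Z = 0 /\ d3 Z = 0 by rewrite /d2 /d3 -rel2 -rel3 !subrr.
by rewrite /det /wedge11 !(proj1 (d0 _)) !(proj2 (d0 _)); ring.
Qed.

End TwoForms.

Definition pair_coords {T U : Type} (f : T -> T -> U) (X1 X2 X3 : T) : U * U * U :=
  (f X2 X3, f X3 X1, f X1 X2).

Definition cform {R : realType} {n : nat} (c : 'rV[R]_n -> 'rV[R]_n -> 'rV[R]_n)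
  (y : 'cV[R]_n) (a b : 'rV[R]_n) : R := (c a b *m y) 0 0.

Section FormFamily.
Context {R : realType} {n : nat}.
Variable c : 'rV[R]_n -> 'rV[R]_n -> 'rV[R]_n.
Hypothesis cL : forall k a a' b, c (k *: a + a') b = k *: c a b + c a' b.
Hypothesis cR : forall k a b b', c a (k *: b + b') = k *: c a b + c a b'.
Hypothesis cA : forall a, c a a = 0.
Implicit Types (y z : 'cV[R]_n) (a b X Y Z W : 'rV[R]_n).

Local Notation w := (cform c).

Lemma cformDy y z a b : w (y + z) a b = w y a b + w z a b.
Proof. by rewrite /cform mulmxDr mxE. Qed.

Lemma cformZy k y a b : w (k *: y) a b = k * w y a b.
Proof. by rewrite /cform -scalemxAr mxE. Qed.

Lemma cformBy y z a b : w (y - z) a b = w y a b - w z a b.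
Proof. by rewrite /cform mulmxBr !mxE. Qed.

Let cDl a a' b : c (a + a') b = c a b + c a' b.
Proof. by rewrite -{1}[a]scale1r cL scale1r. Qed.

Let cDr a b b' : c a (b + b') = c a b + c a b'.
Proof. by rewrite -{1}[b]scale1r cR scale1r. Qed.

Let cZr k a b : c a (k *: b) = k *: c a b.
Proof.
have c0 : c a 0 = 0 by apply: (addrI (c a 0)); rewrite -cDr !addr0.
by rewrite -[k *: b]addr0 cR c0 addr0.
Qed.

Let cN a b : c b a = - c a b.
Proof.
apply/eqP; rewrite -addr_eq0.
by have := cA (a + b); rewrite cDl !cDr !cA add0r addr0 addrC => ->.
Qed.

Lemma cformDr y a b b' : w y a (b + b') = w y a b + w y a b'.
Proof. by rewrite /cform cDr mulmxDl mxE. Qed.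

Lemma cformZr y k a b : w y a (k *: b) = k * w y a b.
Proof. by rewrite /cform cZr -scalemxAl mxE. Qed.

Lemma cformN y a b : w y b a = - w y a b.
Proof. by rewrite /cform cN mulNmx mxE. Qed.

Lemma cform_alt y a : w y a a = 0.
Proof. by rewrite /cform cA mul0mx mxE. Qed.

Definition cform_spans y1 y2 y3 := forall y, exists k1 k2 k3, forall a b,
  w y a b = k1 * w y1 a b + k2 * w y2 a b + k3 * w y3 a b.

Definition cform_rank3 := exists y1 y2 y3,
  (forall k1 k2 k3, (forall a b, k1 * w y1 a b + k2 * w y2 a b + k3 * w y3 a b = 0) ->
     [/\ k1 = 0, k2 = 0 & k3 = 0]) /\ cform_spans y1 y2 y3.

Definition cform_simple := forall y a b d e, wedge22 (w y) (w y) a b d e = 0.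

Definition cform_no_common_factor := forall s : 'cV[R]_n,
  (forall y a b d, wedge12 (fun a => (a *m s) 0 0) (w y) a b d = 0) ->
  forall a, (a *m s) 0 0 = 0.

Definition dual_frame z1 z2 z3 X1 X2 X3 :=
  [/\ pair_coords (w z1) X1 X2 X3 = (1, 0, 0), pair_coords (w z2) X1 X2 X3 = (0, 1, 0),
      pair_coords (w z3) X1 X2 X3 = (0, 0, 1) &
      forall y a b, w y a b = w y X2 X3 * w z1 a b + w y X3 X1 * w z2 a b + w y X1 X2 * w z3 a b].

Hypothesis simple : cform_simple.

Lemma cform_polar y z a b d e : wedge22 (w y) (w z) a b d e = 0.
Proof.
have := simple (y + z) a b d e; have := simple y a b d e; have := simple z a b d e.
by rewrite /wedge22 !cformDy; lra.
Qed.

Lemma cform_normal_triple : cform_rank3 -> exists p q2 q3 X Y,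
  [/\ w p X Y = 1, w q2 X Y = 0, w q3 X Y = 0, cform_spans p q2 q3 &
      ~ (forall a b, w q2 a b = 0)].
Proof.
move=> [y1 [y2 [y3 [indep span]]]].
have [X [Y0 nzY0]] : exists X Y0, w y1 X Y0 != 0.
  apply: NNPP => y1_0; have [] := indep 1 0 0; last by move/eqP; rewrite oner_eq0.
  move=> a b; rewrite !mul0r !addr0 mul1r; apply/eqP/negPn/negP => nz.
  by apply: y1_0; exists a, b.
pose Y := (w y1 X Y0)^-1 *: Y0.
have pXY : w y1 X Y = 1 by rewrite cformZr mulVf.
exists y1, (y2 - w y2 X Y *: y1), (y3 - w y3 X Y *: y1), X, Y; split => //.
- by rewrite cformBy cformZy pXY mulr1 subrr.
- by rewrite cformBy cformZy pXY mulr1 subrr.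
- move=> y; have [k1 [k2 [k3 hk]]] := span y.
  exists (k1 + k2 * w y2 X Y + k3 * w y3 X Y), k2, k3 => a b.
  by rewrite hk !cformBy !cformZy; ring.
- move=> q2_0; have [] := indep (- w y2 X Y) 1 0; last by move=> _ /eqP; rewrite oner_eq0.
  move=> a b; have := q2_0 a b; rewrite cformBy cformZy; lra.
Qed.

Section NormalTriple.
Variables (p q2 q3 : 'cV[R]_n) (X Y : 'rV[R]_n).
Hypotheses (pXY : w p X Y = 1) (q2XY : w q2 X Y = 0) (q3XY : w q3 X Y = 0).
Hypotheses (span : cform_spans p q2 q3) (q2_neq0 : ~ (forall a b, w q2 a b = 0)).

Lemma normal_pivotE a b : w p a b = wedge11 (w p X) (w p Y) a b.
Proof. exact: wedge22_unit_split (simple p X Y a b) pXY. Qed.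

Lemma normal_nullE {q} : w q X Y = 0 ->
  forall a b, w q a b = wedge11 (w p X) (w q Y) a b + wedge11 (w q X) (w p Y) a b.
Proof. by move=> qXY a b; apply: wedge22_polar_split (cform_polar p q X Y a b) pXY qXY. Qed.

Lemma normal_null_minor {q} : w q X Y = 0 ->
  forall Z W, w q X Z * w q Y W = w q X W * w q Y Z.
Proof. by move=> qXY Z W; apply: wedge22_null_split (simple q X Y Z W) qXY. Qed.

Hypothesis nocf : cform_no_common_factor.

Lemma normal_proportional_eq0 la mu :
  (forall Z, mu * w q2 X Z = la * w q2 Y Z) -> (forall Z, mu * w q3 X Z = la * w q3 Y Z) ->
  la = 0 /\ mu = 0.
Proof.
move=> rel2 rel3.
pose sg a := mu * w p X a - la * w p Y a.
have sgL k a a' : sg (k *: a + a') = k * sg a + sg a'.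
  by rewrite /sg !cformDr !cformZr; ring.
have sgE := linear_form_colE sgL.
have sg0 a : sg a = 0.
  rewrite sgE; apply: nocf => y A B C; rewrite /wedge12 -!sgE.
  have [k1 [k2 [k3 hk]]] := span y.
  pose om Z W := k1 * wedge11 (w p X) (w p Y) Z W
    + k2 * (wedge11 (w p X) (w q2 Y) Z W + wedge11 (w q2 X) (w p Y) Z W)
    + k3 * (wedge11 (w p X) (w q3 Y) Z W + wedge11 (w q3 X) (w p Y) Z W).
  have yE Z W : w y Z W = om Z W.
    by rewrite hk normal_pivotE (normal_nullE q2XY) (normal_nullE q3XY).
  rewrite !yE; exact: (wedge12_common_factor (w p X) (w p Y) (w q2 X) (w q2 Y)
    (w q3 X) (w q3 Y) _ _ k1 k2 k3 A B C rel2 rel3).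
have := sg0 X; have := sg0 Y.
by rewrite /sg !cform_alt (cformN p X Y) pXY => sgY sgX; split; lra.
Qed.

(* If all these minors vanished, then mu q(X, .) = la q(Y, .) for q = q2, q3 and
   some (la, mu) <> 0, making mu p(X, .) - la p(Y, .) a common factor of W. *)
Lemma normal_exists_minor :
  exists X3, w q2 X X3 * w q3 Y X3 - w q3 X X3 * w q2 Y X3 != 0.
Proof.
apply: NNPP => none.
have D0 Z : w q2 X Z * w q3 Y Z - w q3 X Z * w q2 Y Z = 0.
  by apply/eqP/negPn/negP => nz; apply: none; exists Z.
have q23XY : w (q2 + q3) X Y = 0 by rewrite cformDy q2XY q3XY addr0.
have cross Z W : w q2 X Z * w q3 Y W = w q3 X W * w q2 Y Z.
  have := D0 (Z + W); have := D0 Z; have := D0 W.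
  have := normal_null_minor q23XY Z W; have := normal_null_minor q2XY Z W.
  have := normal_null_minor q3XY Z W.
  by rewrite !cformDr !cformDy; lra.
have [Z0 nz] : exists Z0, ~ (w q2 X Z0 = 0 /\ w q2 Y Z0 = 0).
  apply: not_all_ex_not => h; apply: q2_neq0 => a b.
  by rewrite (normal_nullE q2XY) /wedge11 !(proj1 (h _)) !(proj2 (h _)); ring.
apply: nz; apply: (@normal_proportional_eq0 (w q2 X Z0) (w q2 Y Z0)) => Z.
- by have := normal_null_minor q2XY Z0 Z; lra.
- by have := cross Z0 Z; lra.
Qed.

Lemma normal_dual_frame X3 :
  w q2 X X3 * w q3 Y X3 - w q3 X X3 * w q2 Y X3 != 0 ->
  exists z1 z2 z3, dual_frame z1 z2 z3 X Y X3.
Proof.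
set u2 := w q2 X X3; set v2 := w q2 Y X3; set u3 := w q3 X X3; set v3 := w q3 Y X3.
set dl := _ - _ => dl_neq0.
(* Cramer's rule for the basis of span(p, q2, q3) dual to evaluation on
   (Y, X3), (X3, X), (X, Y); dl is the determinant of that system. *)
pose z1 := dl^-1 *: (- u3 *: q2 + u2 *: q3).
pose z2 := dl^-1 *: (- v3 *: q2 + v2 *: q3).
pose z3 := p - w p Y X3 *: z1 + w p X X3 *: z2.
have z1E a b : w z1 a b = dl^-1 * (- u3 * w q2 a b + u2 * w q3 a b).
  by rewrite cformZy cformDy !cformZy.
have z2E a b : w z2 a b = dl^-1 * (- v3 * w q2 a b + v2 * w q3 a b).
  by rewrite cformZy cformDy !cformZy.
have z3E a b : w z3 a b = w p a b - w p Y X3 * w z1 a b + w p X X3 * w z2 a b.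
  by rewrite cformDy cformBy !cformZy.
exists z1, z2, z3; split; rewrite /pair_coords.
- rewrite !z1E !(cformN _ X X3) q2XY q3XY -/u2 -/v2 -/u3 -/v3 /dl.
  by congr (_, _, _); field.
- rewrite !z2E !(cformN _ X X3) q2XY q3XY -/u2 -/v2 -/u3 -/v3 /dl.
  by congr (_, _, _); field.
- rewrite !z3E !z1E !z2E !(cformN _ X X3) pXY q2XY q3XY -/u2 -/v2 -/u3 -/v3 /dl.
  by congr (_, _, _); field.
- move=> y a b; have [k1 [k2 [k3 hk]]] := span y.
  rewrite !hk z3E !z1E !z2E !(cformN _ X X3) pXY q2XY q3XY -/u2 -/v2 -/u3 -/v3 /dl.
  by field.
Qed.

End NormalTriple.

Lemma cform_exists_dual_frame : cform_rank3 -> cform_no_common_factor ->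
  exists z1 z2 z3 X1 X2 X3, dual_frame z1 z2 z3 X1 X2 X3.
Proof.
move=> /cform_normal_triple [p [q2 [q3 [X [Y [pXY q2XY q3XY span q2_neq0]]]]]] nocf.
have [X3 minor_neq0] := normal_exists_minor _ _ _ _ _ pXY q2XY q3XY span q2_neq0 nocf.
have [z1 [z2 [z3 frame]]] := normal_dual_frame _ _ _ _ _ pXY q2XY q3XY span _ minor_neq0.
by exists z1, z2, z3, X, Y, X3.
Qed.

Lemma cform_tr q a b : w q^T a b = (q *m (c a b)^T) 0 0.
Proof. by rewrite /cform -[c a b *m q^T]trmxK trmx_mul trmxK mxE. Qed.

Lemma cform_colE y X d : w y X d = (d *m \col_i w y X 'e_i) 0 0.
Proof. by apply: linear_form_colE => k a a'; rewrite cformDr cformZr. Qed.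

Section DualFrame.
Variables (z1 z2 z3 : 'cV[R]_n) (X1 X2 X3 : 'rV[R]_n).
Hypothesis frame : dual_frame z1 z2 z3 X1 X2 X3.

Local Notation e1 := (w z2 X3).
Local Notation e2 := (w z3 X1).
Local Notation e3 := (w z1 X2).

Lemma dual_frame_points :
  [/\ (e1 X1, e1 X2, e1 X3) = (1, 0, 0), (e2 X1, e2 X2, e2 X3) = (0, 1, 0) &
      (e3 X1, e3 X2, e3 X3) = (0, 0, 1)].
Proof.
case: frame => [[z1a z1b z1c] [z2a z2b z2c] [z3a z3b z3c] _].
rewrite !cform_alt (cformN z2 X2 X3) (cformN z3 X3 X1) (cformN z1 X1 X2).
by rewrite z1a z1c z2a z2b z3b z3c oppr0.
Qed.

Lemma dual_frame_wedge :
  [/\ forall a b, w z1 a b = wedge11 e2 e3 a b, forall a b, w z2 a b = wedge11 e3 e1 a b &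
      forall a b, w z3 a b = wedge11 e1 e2 a b].
Proof.
case: frame => [[z1a z1b z1c] [z2a z2b z2c] [z3a z3b z3c] _].
have sw y : w y X1 X3 = - w y X3 X1 by rewrite cformN.
have z1X3 T : w z1 X3 T = - e2 T.
  by have := cform_polar z1 z3 X1 X2 X3 T; rewrite /wedge22 !sw z1a z1b z1c z3a z3b z3c; lra.
have z2X1 T : w z2 X1 T = - e3 T.
  by have := cform_polar z1 z2 X1 X2 X3 T; rewrite /wedge22 !sw z1a z1b z1c z2a z2b z2c; lra.
have z3X2 T : w z3 X2 T = - e1 T.
  by have := cform_polar z2 z3 X1 X2 X3 T; rewrite /wedge22 !sw z2a z2b z2c z3a z3b z3c; lra.
split=> a b.
- by rewrite (wedge22_unit_split (simple z1 X2 X3 a b) z1a) /wedge11 !z1X3; ring.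
- by rewrite (wedge22_unit_split (simple z2 X3 X1 a b) z2b) /wedge11 !z2X1; ring.
- by rewrite (wedge22_unit_split (simple z3 X1 X2 a b) z3c) /wedge11 !z3X2; ring.
Qed.

Let frame_mx : 'M[R]_n :=
  \col_i e1 'e_i *m z1^T + \col_i e2 'e_i *m z2^T + \col_i e3 'e_i *m z3^T.
Let frame_proj : 'M[R]_n := (c X2 X3)^T *m z1^T + (c X3 X1)^T *m z2^T + (c X1 X2)^T *m z3^T.

Lemma frame_mxE d : d *m frame_mx = e1 d *: z1^T + e2 d *: z2^T + e3 d *: z3^T.
Proof. by rewrite /frame_mx !mulmxDr !mulmx_col_row -!cform_colE. Qed.

Lemma frame_projE q :
  q *m frame_proj = w q^T X2 X3 *: z1^T + w q^T X3 X1 *: z2^T + w q^T X1 X2 *: z3^T.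
Proof. by rewrite /frame_proj !mulmxDr !mulmx_col_row !cform_tr. Qed.

Lemma frame_mx_cform d a b :
  w (d *m frame_mx)^T a b = e1 d * w z1 a b + e2 d * w z2 a b + e3 d * w z3 a b.
Proof. by rewrite frame_mxE !linearD !linearZ /= !cformDy !cformZy !trmxK. Qed.

Lemma frame_kernel q a b : w (q *m (1%:M - frame_proj))^T a b = 0.
Proof.
case: frame => _ _ _ Phi.
rewrite mulmxBr mulmx1 frame_projE linearB /= cformBy !linearD !linearZ /= !cformDy !cformZy !trmxK.
by have := Phi q^T a b; lra.
Qed.

Lemma frame_full : row_full (frame_mx + (1%:M - frame_proj))%MS.
Proof.
have [[e1a e1b e1c] [e2a e2b e2c] [e3a e3b e3c]] := dual_frame_points.
apply: row_full_adds => u.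
pose d := w u^T X2 X3 *: X1 + w u^T X3 X1 *: X2 + w u^T X1 X2 *: X3.
exists (d *m frame_mx), (u *m (1%:M - frame_proj)); split; rewrite ?submxMl //.
rewrite frame_mxE mulmxBr mulmx1 frame_projE /d !cformDr !cformZr.
rewrite e1a e1b e1c e2a e2b e2c e3a e3b e3c !mulr1 !mulr0 !addr0 !add0r.
by rewrite addrC subrK.
Qed.

Lemma frame_cap : (frame_mx :&: (1%:M - frame_proj) = 0)%MS.
Proof.
case: frame => [[z1a z1b z1c] [z2a z2b z2c] [z3a z3b z3c] _].
apply: capmx_eq0 => u /submxP[d ->] /submxP[d' ud'].
have ev a b : w (d *m frame_mx)^T a b = 0 by rewrite ud' frame_kernel.
have := ev X2 X3; have := ev X3 X1; have := ev X1 X2.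
rewrite !frame_mx_cform z1a z1b z1c z2a z2b z2c z3a z3b z3c.
rewrite !mulr1 !mulr0 !addr0 !add0r => h3 h2 h1.
by rewrite frame_mxE h1 h2 h3 !scale0r !addr0.
Qed.

(* N^T = frame_mx + K, where the rows of K kill every form of W and K is chosen
   by unitmx_completion to make N invertible. *)
Lemma frame_pairing : exists2 N : 'M[R]_n, N \in unitmx &
  forall a b d, bil N (c a b) d = e1 d * w z1 a b + e2 d * w z2 a b + e3 d * w z3 a b.
Proof.
have [K KQ unitK] := unitmx_completion frame_full frame_cap.
exists (frame_mx + K)^T; first by rewrite unitmx_tr.
move=> a b d; rewrite bil_tr trmxK /bil -cform_tr mulmxDr linearD cformDy frame_mx_cform.
have /submxP[d' ->] : (d *m K <= 1%:M - frame_proj)%MS by exact: submx_trans (submxMl _ _) KQ.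
by rewrite frame_kernel addr0.
Qed.

End DualFrame.

Theorem cform_skew_pairing : cform_rank3 -> cform_no_common_factor ->
  exists2 N : 'M[R]_n, N \in unitmx & forall a b d, bil N (c a b) d = - bil N (c a d) b.
Proof.
move=> rank3 nocf.
have [z1 [z2 [z3 [X1 [X2 [X3 frame]]]]]] := cform_exists_dual_frame rank3 nocf.
have [N unitN NE] := frame_pairing _ _ _ _ _ _ frame.
have := dual_frame_wedge _ _ _ _ _ _ frame.
(* generalizing e1, e2, e3 keeps the rewrites with z1E, z2E, z3E from looping *)
move: (w z2 X3) (w z3 X1) (w z1 X2) NE => e1 e2 e3 NE [z1E z2E z3E].
by exists N => // a b d; rewrite !NE !z1E !z2E !z3E /wedge11; ring.
Qed.

End FormFamily.

Lemma lie_bracket_antisym {R : realType} {m : nat} {br : 'rV[R]_m -> 'rV[R]_m -> 'rV[R]_m} :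
  lie_bracket br -> forall X Y, br Y X = - br X Y.
Proof.
case=> brL brR brA _ X Y.
have brDl X' Y' Z : br (X' + Y') Z = br X' Z + br Y' Z by rewrite -{1}[X']scale1r brL scale1r.
have brDr X' Y' Z : br X' (Y' + Z) = br X' Y' + br X' Z by rewrite -{1}[Y']scale1r brR scale1r.
apply/eqP; rewrite -addr_eq0; apply/eqP.
by have := brA (X + Y); rewrite brDl !brDr !brA add0r addr0 addrC.
Qed.

Section AdaptedBasis.
Context {R : realType} {n : nat}.

Lemma adapted_basis {V H : 'M[R]_(n + n)} : \rank V = n -> complementary V H ->
  exists2 P : 'M[R]_(n + n), P \in unitmx &
    (forall X : 'rV_(n + n), (X <= V)%MS <-> exists a : 'rV_n, X = row_mx a 0 *m P) /\
    (forall X : 'rV_(n + n), (X <= H)%MS <-> exists b : 'rV_n, X = row_mx 0 b *m P).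
Proof.
move=> rankV [hsum hcap].
have fullVH := row_full_adds hsum; have capVH := capmx_eq0 hcap.
have rankH : \rank H = n.
  have := mxrank_sum_cap V H; rewrite capVH mxrank0 addn0 (eqP fullVH) rankV.
  by move/eqP; rewrite eqn_add2l => /eqP.
pose BV := castmx (rankV, erefl (n + n)) (row_base V).
pose BH := castmx (rankH, erefl (n + n)) (row_base H).
have eqBV : (BV :=: V)%MS := eqmx_trans (eqmx_cast _ _) (eq_row_base V).
have eqBH : (BH :=: H)%MS := eqmx_trans (eqmx_cast _ _) (eq_row_base H).
exists (col_mx BV BH).
  by rewrite -row_full_unit -sub1mx -addsmxE (adds_eqmx eqBV eqBH) sub1mx.
split=> X.
- rewrite -eqBV; split=> [/submxP[a ->]|[a ->]]; last by rewrite mul_row_col mul0mx addr0 submxMl.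
  by exists a; rewrite mul_row_col mul0mx addr0.
- rewrite -eqBH; split=> [/submxP[b ->]|[b ->]]; last by rewrite mul_row_col mul0mx add0r submxMl.
  by exists b; rewrite mul_row_col mul0mx add0r.
Qed.

End AdaptedBasis.

Definition vbracket {R : realType} {n : nat}
  (br : 'rV[R]_(n + n) -> 'rV[R]_(n + n) -> 'rV[R]_(n + n)) (P : 'M[R]_(n + n))
  (a b : 'rV[R]_n) : 'rV[R]_n :=
  rsubmx (br (row_mx a 0 *m P) (row_mx b 0 *m P) *m invmx P).

Definition split_metric {R : realType} {n : nat} (P : 'M[R]_(n + n)) (N : 'M[R]_n) :
  'M[R]_(n + n) :=
  invmx P *m block_mx 0 N^T N 0 *m (invmx P)^T.

Section SplitCoordinates.
Context {R : realType} {n : nat} {br : 'rV[R]_(n + n) -> 'rV[R]_(n + n) -> 'rV[R]_(n + n)}.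
Variables (V H P : 'M[R]_(n + n)).
Implicit Types (X Y Z : 'rV[R]_(n + n)) (a b d : 'rV[R]_n).
Hypothesis lie : lie_bracket br.
Hypothesis unitP : P \in unitmx.
Hypothesis Vcoord : forall X, (X <= V)%MS <-> exists a : 'rV_n, X = row_mx a 0 *m P.
Hypothesis Hcoord : forall X, (X <= H)%MS <-> exists b : 'rV_n, X = row_mx 0 b *m P.

Local Notation c := (vbracket br P).

Lemma split_coordE X : X = row_mx (lsubmx (X *m invmx P)) (rsubmx (X *m invmx P)) *m P.
Proof. by rewrite hsubmxK mulmxKV. Qed.

Lemma row_mx0_mulmx_linear k (a a' : 'rV[R]_n) :
  row_mx (k *: a + a') (0 : 'rV_n) *m P = k *: (row_mx a 0 *m P) + row_mx a' 0 *m P.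
Proof. by rewrite scalemxAl -mulmxDl scale_row_mx add_row_mx scaler0 addr0. Qed.

Lemma vbracketL k a a' b : c (k *: a + a') b = k *: c a b + c a' b.
Proof.
case: lie => brL _ _ _.
by rewrite /vbracket row_mx0_mulmx_linear brL mulmxDl -scalemxAl linearP.
Qed.

Lemma vbracketR k a b b' : c a (k *: b + b') = k *: c a b + c a b'.
Proof.
case: lie => _ brR _ _.
by rewrite /vbracket row_mx0_mulmx_linear brR mulmxDl -scalemxAl linearP.
Qed.

Lemma vbracket_alt a : c a a = 0.
Proof. by case: lie => _ _ brA _; rewrite /vbracket brA mul0mx linear0. Qed.

Lemma vpoint_sub a : (row_mx a 0 *m P <= V)%MS.
Proof. by apply/Vcoord; exists a. Qed.

Lemma ann_form_appE {xi} : in_ann V xi ->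
  forall X, form_app xi X = (rsubmx (X *m invmx P) *m dsubmx (P *m xi)) 0 0.
Proof.
move=> hxi X.
have u0 : usubmx (P *m xi) = 0.
  apply/matrixP => i j; rewrite [j]ord1.
  have := hxi _ (vpoint_sub 'e_i); rewrite /form_app -mulmxA.
  rewrite -{1}[P *m xi]vsubmxK mul_row_col mul0mx addr0 -rowE.
  by rewrite [(row _ _) _ _]mxE => ->; rewrite mxE.
by rewrite /form_app {1}(split_coordE X) -mulmxA -{1}[P *m xi]vsubmxK mul_row_col u0 mulmx0 add0r.
Qed.

Lemma dform_vbracket {xi} : in_ann V xi -> forall a b,
  dform br xi (row_mx a 0 *m P) (row_mx b 0 *m P) = - cform c (dsubmx (P *m xi)) a b.
Proof. by move=> hxi a b; rewrite /dform ann_form_appE. Qed.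

Lemma ann_lift (y : 'cV[R]_n) : in_ann V (invmx P *m col_mx 0 y).
Proof.
move=> X /Vcoord[a ->].
by rewrite /form_app mulmxA mulmxK // mul_row_col mulmx0 mul0mx addr0 mxE.
Qed.

Lemma ann_liftK (y : 'cV[R]_n) : dsubmx (P *m (invmx P *m col_mx 0 y)) = y.
Proof. by rewrite mulKVmx // col_mxKd. Qed.

Lemma form_app_lift (s : 'cV[R]_n) a :
  form_app (invmx P *m col_mx s 0) (row_mx a 0 *m P) = (a *m s) 0 0.
Proof. by rewrite /form_app mulmxA mulmxK // mul_row_col mul0mx addr0. Qed.

Lemma vbracket_rank3 : NH_rank3 br V -> cform_rank3 c.
Proof.
move=> [xi1 [xi2 [xi3 [ann1 ann2 ann3 indep span]]]].
exists (dsubmx (P *m xi1)), (dsubmx (P *m xi2)), (dsubmx (P *m xi3)); split.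
- move=> k1 k2 k3 hk; apply: indep => X Y /Vcoord[a ->] /Vcoord[b ->].
  by rewrite !dform_vbracket //; have := hk a b; lra.
- move=> y; have ann_y := ann_lift y; have [k1 [k2 [k3 hk]]] := span _ ann_y.
  exists k1, k2, k3 => a b; have := hk _ _ (vpoint_sub a) (vpoint_sub b).
  by rewrite !dform_vbracket // ann_liftK; lra.
Qed.

Lemma vbracket_simple : NH_image_simple br V -> cform_simple c.
Proof.
move=> simple y a b d e.
have := simple _ (ann_lift y) _ _ _ _ (vpoint_sub a) (vpoint_sub b) (vpoint_sub d) (vpoint_sub e).
by rewrite /wedge22 !(dform_vbracket (ann_lift y)) ann_liftK; lra.
Qed.

Lemma vbracket_no_common_factor : NH_no_common_factor br V -> cform_no_common_factor c.
Proof.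
move=> nocf s hs a; apply/eqP/negPn/negP => nz; apply: nocf.
exists (invmx P *m col_mx s 0); split.
  by exists (row_mx a 0 *m P); rewrite vpoint_sub form_app_lift.
move=> xi hxi X Y Z /Vcoord[aX ->] /Vcoord[aY ->] /Vcoord[aZ ->].
have := hs (dsubmx (P *m xi)) aX aY aZ.
by rewrite /wedge12 !form_app_lift !dform_vbracket //; lra.
Qed.

Variable N : 'M[R]_n.
Local Notation G := (split_metric P N).

Lemma split_metricE a b a' b' :
  bil G (row_mx a b *m P) (row_mx a' b' *m P) = bil N b a' + bil N^T a b'.
Proof.
rewrite /bil /split_metric trmx_mul trmx_inv !mulmxA mulmxK // mulmxKV ?unitmx_tr //.
rewrite mul_row_block !mulmx0 !addr0 !add0r tr_row_mx mul_row_col.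
by rewrite mxE.
Qed.

Lemma split_metric_compatible : N \in unitmx -> compatible_GL_structure V H G.
Proof.
move=> unitN; split.
- by rewrite /split_metric !trmx_mul trmxK tr_block_mx !trmx0 trmxK !mulmxA.
- have unitJ : block_mx 0 N^T N 0 \in unitmx.
    have JJ : block_mx 0 N^T N 0 *m block_mx 0 (invmx N) (invmx N^T) 0 = 1%:M.
      rewrite mulmx_block !mulmx0 !mul0mx !addr0 !add0r mulmxV ?unitmx_tr // mulmxV //.
      by rewrite [RHS]scalar_mx_block.
    by have [] := mulmx1_unit JJ.
  by rewrite /split_metric !unitmx_mul unitmx_tr unitmx_inv unitP unitJ.
- move=> v1 v2 h1 h2 /Vcoord[a1 ->] /Vcoord[a2 ->] /Hcoord[b1 ->] /Hcoord[b2 ->].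
  rewrite -!mulmxBl -!mulmxDl !opp_row_mx !add_row_mx !oppr0 !addr0 !add0r !split_metricE.
  by rewrite !bilNl !bilNr; ring.
Qed.

Lemma split_metric_vbracket a b d :
  bil G (br (row_mx a 0 *m P) (row_mx b 0 *m P)) (row_mx d 0 *m P) = bil N (c a b) d.
Proof.
by rewrite {1}(split_coordE (br _ _)) split_metricE /bil trmx0 mulmx0 [X in _ + X]mxE addr0.
Qed.

Lemma split_metric_tau2 :
  (forall a b d, bil N (c a b) d = - bil N (c a d) b) -> tau2_zero br V G.
Proof.
move=> skew X Y Z /Vcoord[a ->] /Vcoord[b ->] /Vcoord[d ->]; split.
- by rewrite (lie_bracket_antisym lie (row_mx a 0 *m P)) bilNl opprK.
- by rewrite !split_metric_vbracket skew.
Qed.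

Lemma split_metric_tau56 : lie_subalgebra br H -> tau56_zero br H G.
Proof.
move=> subH X Y Z hX hY /Hcoord[d ->].
have /Hcoord[e ->] := subH _ _ hX hY.
by rewrite split_metricE /bil trmx0 mulmx0 !mul0mx !mxE addr0.
Qed.

End SplitCoordinates.

Theorem proposition7p2 (R : realType) (n : nat)
  (br : 'rV[R]_(n + n) -> 'rV[R]_(n + n) -> 'rV[R]_(n + n))
  (V : 'M[R]_(n + n)) :
  lie_bracket br ->
  \rank V = n ->
  NH_rank3 br V ->
  NH_image_simple br V ->
  NH_no_common_factor br V ->
  forall H : 'M[R]_(n + n),
    lie_subalgebra br H -> complementary V H ->
    exists G : 'M[R]_(n + n),
      [/\ compatible_GL_structure V H G, tau2_zero br V G & tau56_zero br H G].
Proof.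
move=> lie rankV rank3 simple nocf H subH compl.
have [P unitP [Vcoord Hcoord]] := adapted_basis rankV compl.
have [N unitN skewN] := cform_skew_pairing _ (vbracketL P lie) (vbracketR P lie)
  (vbracket_alt P lie) (vbracket_simple _ _ unitP Vcoord simple)
  (vbracket_rank3 _ _ unitP Vcoord rank3) (vbracket_no_common_factor _ _ unitP Vcoord nocf).
exists (split_metric P N); split.
- exact: split_metric_compatible unitP Vcoord Hcoord _ unitN.
- exact: split_metric_tau2 lie unitP Vcoord _ skewN.
- exact: split_metric_tau56 unitP Hcoord _ subH.
Qed.
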